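(* Let $R$ be a countable ring, let $B$ be a countable index set, and let $(M_\alpha)_{\alpha\in B}$ be any family of unitary left $R$-modules. Then the left $R$-module $$\prod_{\alpha\in B}M_\alpha\Big/\bigoplus_{\alpha\in B}M_\alpha$$ is algebraically compact.
   Context: All modules are unitary left $R$-modules. For a cardinal $\kappa$, a module $M$ is $\kappa$-compact if every system of at most $\kappa$ linear equations $\sum_{j\in J} r_{ij}x_j = m_i$ ($i\in I$, $r_{ij}\in R$, for each $i$ almost all $r_{ij}=0$, $m_i\in M$, $|I|,|J|\le\kappa$) has a solution in $M$ whenever every finite subsystem has a solution in $M$. $M$ is algebraically compact if it is $\kappa$-compact for every cardinal $\kappa$ (equivalently, $M$ is pure injective). *)

From HB Require Import structures.
From mathcomp Require Import all_boot all_algebra generic_quotient.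
From mathcomp Require Import boolp.
From Stdlib Require List.
Set Implicit Arguments. Unset Strict Implicit. Unset Printing Implicit Defensive.
Import GRing.Theory.
Local Open Scope ring_scope.
Local Open Scope quotient_scope.

Section ProductModule.
Variables (R : pzRingType) (B : eqType) (M : B -> lmodType R).

Definition prodmod : Type := forall b : B, M b.

HB.instance Definition _ := Choice.copy prodmod (forall b : B, M b).

Definition pm_zero : prodmod := fun b => 0.
Definition pm_add (f g : prodmod) : prodmod := fun b => f b + g b.
Definition pm_opp (f : prodmod) : prodmod := fun b => - f b.
Definition pm_scale (a : R) (f : prodmod) : prodmod := fun b => a *: f b.

Let fext (f g : prodmod) : (forall b, f b = g b) -> f = g :=
  @functional_extensionality_dep _ _ f g.

Lemma pm_addA : associative pm_add.
Proof. by move=> f g h; apply: fext => b; rewrite /pm_add addrA. Qed.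
Lemma pm_addC : commutative pm_add.
Proof. by move=> f g; apply: fext => b; rewrite /pm_add addrC. Qed.
Lemma pm_add0 : left_id pm_zero pm_add.
Proof. by move=> f; apply: fext => b; rewrite /pm_add /pm_zero add0r. Qed.
Lemma pm_addN : left_inverse pm_zero pm_opp pm_add.
Proof. by move=> f; apply: fext => b; rewrite /pm_add /pm_opp addNr. Qed.

HB.instance Definition _ :=
  GRing.isZmodule.Build prodmod pm_addA pm_addC pm_add0 pm_addN.

Lemma pm_scaleA a c (f : prodmod) :
  pm_scale a (pm_scale c f) = pm_scale (a * c) f.
Proof. by apply: fext => b; rewrite /pm_scale scalerA. Qed.
Lemma pm_scale1 : left_id 1 pm_scale.
Proof. by move=> f; apply: fext => b; rewrite /pm_scale scale1r. Qed.
Lemma pm_scaleDr : right_distributive pm_scale +%R.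
Proof. by move=> a f g; apply: fext => b; rewrite /pm_scale /= /pm_add scalerDr. Qed.
Lemma pm_scaleDl (f : prodmod) : {morph pm_scale^~ f : a c / a + c}.
Proof. by move=> a c; apply: fext => b; rewrite /pm_scale /= /pm_add scalerDl. Qed.

HB.instance Definition _ :=
  GRing.Zmodule_isLmodule.Build R prodmod pm_scaleA pm_scale1 pm_scaleDr pm_scaleDl.

Lemma pmE0 b : (0 : prodmod) b = 0. Proof. by []. Qed.
Lemma pmED (f g : prodmod) b : (f + g) b = f b + g b. Proof. by []. Qed.
Lemma pmEN (f : prodmod) b : (- f) b = - f b. Proof. by []. Qed.
Lemma pmEZ a (f : prodmod) b : (a *: f) b = a *: f b. Proof. by []. Qed.

Definition in_dsum (f : prodmod) : Prop :=
  exists s : seq B, forall b, b \notin s -> f b = 0.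

Lemma in_dsum0 : in_dsum 0.
Proof. by exists [::]. Qed.

Lemma in_dsumB f g : in_dsum f -> in_dsum g -> in_dsum (f - g).
Proof.
move=> [s Hs] [t Ht]; exists (s ++ t) => b; rewrite mem_cat negb_or => /andP[bs bt].
by rewrite pmED pmEN Hs // Ht // subr0.
Qed.

Lemma in_dsumZ a f : in_dsum f -> in_dsum (a *: f).
Proof. by move=> [s Hs]; exists s => b bs; rewrite pmEZ Hs // scaler0. Qed.

Lemma in_dsumN f : in_dsum f -> in_dsum (- f).
Proof. by move=> Hf; rewrite -sub0r; apply: in_dsumB => //; apply: in_dsum0. Qed.

Lemma in_dsumD f g : in_dsum f -> in_dsum g -> in_dsum (f + g).
Proof. by move=> Hf Hg; rewrite -[g]opprK; apply: in_dsumB => //; apply: in_dsumN. Qed.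

Definition dsum_rel (f g : prodmod) : bool := `[< in_dsum (f - g) >].

Lemma dsum_relP f g : reflect (in_dsum (f - g)) (dsum_rel f g).
Proof. exact: asboolP. Qed.

Lemma dsum_rel_refl : reflexive dsum_rel.
Proof. by move=> f; apply/dsum_relP; rewrite subrr; apply: in_dsum0. Qed.
Lemma dsum_rel_sym : symmetric dsum_rel.
Proof.
move=> f g; apply/dsum_relP/dsum_relP => /in_dsumN; by rewrite opprB.
Qed.
Lemma dsum_rel_trans : transitive dsum_rel.
Proof.
move=> g f h /dsum_relP H1 /dsum_relP H2; apply/dsum_relP.
by have := in_dsumD H1 H2; rewrite addrA subrK.
Qed.

Canonical dsum_equiv := EquivRel dsum_rel dsum_rel_refl dsum_rel_sym dsum_rel_trans.

Definition quotmod : Type := {eq_quot dsum_rel}.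
HB.instance Definition _ := Choice.on quotmod.
HB.instance Definition _ := EqQuotient.on quotmod.

Local Notation pi := (\pi_quotmod).

Lemma quot_eqP (f g : prodmod) : reflect (pi f = pi g) (dsum_rel f g).
Proof. exact: eqmodP. Qed.

Lemma repr_rel (f : prodmod) : in_dsum (repr (pi f) - f).
Proof. by apply/dsum_relP/quot_eqP; rewrite reprK. Qed.

Definition qm_zero : quotmod := pi 0.
Definition qm_add : quotmod -> quotmod -> quotmod :=
  locked (fun x y : quotmod => pi (repr x + repr y)).
Definition qm_opp : quotmod -> quotmod := locked (fun x : quotmod => pi (- repr x)).
Definition qm_scale : R -> quotmod -> quotmod :=
  locked (fun (a : R) (x : quotmod) => pi (a *: repr x)).

Lemma qm_addE f g : qm_add (pi f) (pi g) = pi (f + g).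
Proof.
rewrite /qm_add -lock.
apply/quot_eqP/dsum_relP; rewrite opprD addrACA.
by apply: in_dsumD; apply: repr_rel.
Qed.
Lemma qm_oppE f : qm_opp (pi f) = pi (- f).
Proof.
rewrite /qm_opp -lock.
apply/quot_eqP/dsum_relP; rewrite -opprD; apply: in_dsumN.
exact: repr_rel.
Qed.
Lemma qm_scaleE a f : qm_scale a (pi f) = pi (a *: f).
Proof. rewrite /qm_scale -lock. apply/quot_eqP/dsum_relP; rewrite -scalerBr; apply: in_dsumZ; exact: repr_rel. Qed.

Lemma qm_addA : associative qm_add.
Proof.
move=> x y z; elim/quotW: x => f; elim/quotW: y => g; elim/quotW: z => h.
by rewrite !qm_addE addrA.
Qed.
Lemma qm_addC : commutative qm_add.
Proof. by move=> x y; elim/quotW: x => f; elim/quotW: y => g; rewrite !qm_addE addrC. Qed.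
Lemma qm_add0 : left_id qm_zero qm_add.
Proof. by move=> x; elim/quotW: x => f; rewrite /qm_zero qm_addE add0r. Qed.
Lemma qm_addN : left_inverse qm_zero qm_opp qm_add.
Proof. by move=> x; elim/quotW: x => f; rewrite qm_oppE qm_addE addNr. Qed.

HB.instance Definition _ :=
  GRing.isZmodule.Build quotmod qm_addA qm_addC qm_add0 qm_addN.

Lemma qm_scaleA a c (x : quotmod) :
  qm_scale a (qm_scale c x) = qm_scale (a * c) x.
Proof. by elim/quotW: x => f; rewrite !qm_scaleE scalerA. Qed.
Lemma qm_scale1 : left_id 1 qm_scale.
Proof. by move=> x; elim/quotW: x => f; rewrite qm_scaleE scale1r. Qed.
Lemma qm_scaleDr : right_distributive qm_scale +%R.
Proof.
move=> a x y.
change (qm_scale a (qm_add x y) = qm_add (qm_scale a x) (qm_scale a y)).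
elim/quotW: x => f; elim/quotW: y => g.
by rewrite /= !(qm_addE, qm_scaleE) scalerDr.
Qed.
Lemma qm_scaleDl (x : quotmod) : {morph qm_scale^~ x : a c / a + c}.
Proof.
move=> a c; change (qm_scale (a + c) x = qm_add (qm_scale a x) (qm_scale c x)).
by elim/quotW: x => f; rewrite !(qm_addE, qm_scaleE) scalerDl.
Qed.

HB.instance Definition _ :=
  GRing.Zmodule_isLmodule.Build R quotmod qm_scaleA qm_scale1 qm_scaleDr qm_scaleDl.

End ProductModule.

(* A system of linear equations over a module N with variables indexed by J *)
(* and equations indexed by I: equation i is                                *)
(*     \sum_(p <- eqs i) p.1 *: x_(p.2) = rhs i,                             *)
(* i.e. each equation involves only finitely many variables (a finite list  *)
(* of (coefficient, variable) pairs).                                       *)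
Definition solves (R : pzRingType) (N : lmodType R) (I J : Type)
    (eqs : I -> seq (R * J)) (rhs : I -> N) (x : J -> N) (i : I) : Prop :=
  \sum_(p <- eqs i) p.1 *: x p.2 = rhs i.

(* N is kappa-compact: systems with |I|, |J| <= kappa that are finitely       *)
(* solvable are solvable.  Cardinals are encoded by index types.             *)
Definition kappa_compact (R : pzRingType) (N : lmodType R) (K : Type) : Prop :=
  forall (I J : Type) (fI : I -> K) (fJ : J -> K),
    injective fI -> injective fJ ->
  forall (eqs : I -> seq (R * J)) (rhs : I -> N),
    (forall F : seq I, exists x : J -> N,
        forall i, List.In i F -> solves eqs rhs x i) ->
    exists x : J -> N, forall i, solves eqs rhs x i.

Definition alg_compact (R : pzRingType) (N : lmodType R) : Prop :=
  forall K : Type, kappa_compact N K.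

From HB Require Import structures.
From mathcomp Require Import all_boot all_algebra generic_quotient.
From mathcomp Require Import boolp classical_sets.
From Stdlib Require List.
From Stdlib Require Import Lia.
Set Implicit Arguments. Unset Strict Implicit. Unset Printing Implicit Defensive.
Import GRing.Theory.
Local Open Scope ring_scope.
Local Open Scope quotient_scope.
Local Open Scope classical_set_scope.

(* Call a set G of pairs (variable, value) extensible if every finite
   subsystem has a solution extending G.  By Zorn's lemma there is a maximal
   extensible G, so it suffices to show that one more variable j can always
   be assigned.  Once the variables assigned by G are deleted and the others
   renumbered, a finite subsystem has one of countably many shapes, R being
   countable.  The values of j in solutions of a subsystem extending G form a
   coset of the values in homogeneous solutions, which depend only on the
   shape, and two subsystems have a common solution extending G; hence
   subsystems of equal shape admit the same values of j.  It remains to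
   solve one representative subsystem of each shape simultaneously, which in
   prod_b M b / (+)_b M b with B countable is a diagonal argument: coordinate
   b is copied from a lifted solution of the first m representatives, for the
   largest m <= pickle b whose lifted equations hold at b.  Each stage fails
   at finitely many coordinates only, so every representative is solved
   modulo the direct sum. *)

Lemma eq_big_In (V : nmodType) (T : Type) (s : seq T) (F G : T -> V) :
  (forall x, List.In x s -> F x = G x) -> \sum_(x <- s) F x = \sum_(x <- s) G x.
Proof.
elim: s => [|x s IHs] eqFG; first by rewrite !big_nil.
rewrite !big_cons eqFG /=; last by left.
by rewrite IHs // => y sy; apply: eqFG; right.
Qed.

Lemma nth_find_In (T : Type) (x0 x : T) (s : seq T) :
  List.In x s -> nth x0 s (find (fun y => `[< y = x >]) s) = x.
Proof.
move=> sx; suff /(nth_find x0)/asboolP : has (fun y => `[< y = x >]) s by [].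
elim: s sx => //= y s IHs [->|/IHs ->]; last exact: orbT.
by rewrite asboolT.
Qed.

Fixpoint last_below (p : pred nat) (n : nat) : nat :=
  if n is m.+1 then (if p m then m else last_below p m) else 0.

Lemma last_belowP (p : pred nat) n k :
  (k < n)%N -> p k -> p (last_below p n) /\ (k <= last_below p n)%N.
Proof.
elim: n => [|n IHn] //= kn pk.
case pn: (p n); first by split => //; rewrite -ltnS.
apply: IHn => //; rewrite ltn_neqAle -ltnS kn andbT.
by apply/eqP => kn_eq; move: pn; rewrite -kn_eq pk.
Qed.

Lemma countable_image_section (X : Type) (T : countType) (f : X -> T) (x0 : X) :
  exists g : nat -> X, forall x, f (g (pickle (f x))) = f x.
Proof.
have /choice [rep repP] : forall t, exists x', forall x, f x = t -> f x' = t.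
  move=> t; case: (pselect (exists x, f x = t)) => [[x' <-] | no_x].
    by exists x'.
  by exists x0 => x fx; case: no_x; exists x.
by exists (fun n => oapp rep x0 (unpickle n)) => x; rewrite pickleK /=; apply: repP.
Qed.

Definition cofinitely (T : eqType) (P : T -> Prop) : Prop :=
  exists s : seq T, forall x, x \notin s -> P x.

Lemma cofinitely_all (T : eqType) (X : Type) (P : X -> T -> Prop) (L : seq X) :
  (forall t, List.In t L -> cofinitely (P t)) ->
  cofinitely (fun x => forall t, List.In t L -> P t x).
Proof.
elim: L => [|t L IHL] cofP; first by exists [::].
have [s Ps] := cofP t (or_introl erefl).
have [s' Ps'] := IHL (fun u Lu => cofP u (or_intror Lu)).
exists (s ++ s') => x; rewrite mem_cat negb_or => /andP[xs xs'] u [<-|Lu].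
  exact: Ps.
exact: Ps'.
Qed.

Section Quotient.
Variables (R : pzRingType) (B : eqType) (M : B -> lmodType R).
Local Notation P := (prodmod M).
Local Notation Q := (quotmod M).
Local Notation pi := (\pi_Q).

Lemma piD (f g : P) : pi (f + g) = pi f + pi g.
Proof. by rewrite -qm_addE. Qed.

Lemma piZ a (f : P) : pi (a *: f) = a *: pi f.
Proof. by rewrite -qm_scaleE. Qed.

Lemma pi_sum (T : Type) (s : seq T) (F : T -> P) :
  pi (\sum_(x <- s) F x) = \sum_(x <- s) pi (F x).
Proof. exact: (big_morph _ piD (erefl _)). Qed.

Lemma prodmod_sumE (T : Type) (s : seq T) (F : T -> P) b :
  (\sum_(x <- s) F x) b = \sum_(x <- s) F x b.
Proof.
elim: s => [|x s IHs]; first by rewrite !big_nil.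
by rewrite !big_cons pmED IHs.
Qed.

Lemma pi_eqP (f g : P) : pi f = pi g <-> cofinitely (fun b => f b = g b).
Proof.
split=> [/quot_eqP/dsum_relP [s fg] | [s fg]].
  by exists s => b /fg; rewrite pmED pmEN => /eqP; rewrite subr_eq0 => /eqP.
apply/quot_eqP/dsum_relP; exists s => b /fg fgb.
by rewrite pmED pmEN fgb subrr.
Qed.

Variables (I J : Type) (eqs : I -> seq (R * J)) (rhs : I -> Q).

Lemma solves_pi (x : J -> P) i :
  solves eqs rhs (fun v => pi (x v)) i <->
  cofinitely (fun b => \sum_(p <- eqs i) p.1 *: x p.2 b = repr (rhs i) b).
Proof.
have -> : solves eqs rhs (fun v => pi (x v)) i =
          (pi (\sum_(p <- eqs i) p.1 *: x p.2) = pi (repr (rhs i))).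
  rewrite /solves reprK pi_sum; congr (_ = _).
  by apply: eq_bigr => p _; rewrite piZ.
apply: (iff_trans (pi_eqP _ _)).
by split=> [] [s sol_s]; exists s => b /sol_s; rewrite prodmod_sumE.
Qed.

End Quotient.

Section Diagonal.
Variables (R : pzRingType) (B : countType) (M : B -> lmodType R).
Local Notation P := (prodmod M).
Local Notation Q := (quotmod M).
Local Notation pi := (\pi_Q).
Variables (I J : Type) (eqs : I -> seq (R * J)) (rhs : I -> Q).

Lemma countable_diagonal (H : nat -> seq I) (Y : nat -> J -> P) :
  (forall k m i, (k <= m)%N -> List.In i (H k) -> List.In i (H m)) ->
  (forall m i, List.In i (H m) -> solves eqs rhs (fun v => pi (Y m v)) i) ->
  exists w : J -> P, (forall v f, (forall m, Y m v = f) -> w v = f) /\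
    forall k i, List.In i (H k) -> solves eqs rhs (fun v => pi (w v)) i.
Proof.
move=> H_mono Y_sol.
pose lifted_sol m b := forall i, List.In i (H m) ->
  \sum_(p <- eqs i) p.1 *: Y m p.2 b = repr (rhs i) b.
have lifted_cof m : cofinitely (lifted_sol m).
  by apply: cofinitely_all => i /Y_sol /solves_pi.
pose stage b := last_below (fun m => `[< lifted_sol m b >]) (pickle b).+1.
exists (fun v b => Y (stage b) v b); split.
  by move=> v f Yv; apply: functional_extensionality_dep => b; rewrite Yv.
move=> k i Hki; apply/solves_pi.
have [s sol_k] := lifted_cof k.
exists (s ++ pmap unpickle (iota 0 k)) => b.
rewrite mem_cat negb_or => /andP[bs bk].
have kb : (k < (pickle b).+1)%N.
  rewrite ltnS leqNgt; apply: contra bk => bk.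
  by rewrite mem_pmap; apply/mapP; exists (pickle b); rewrite ?pickleK ?mem_iota.
have [/asboolP sol_b k_le] :=
  @last_belowP (fun m => `[< lifted_sol m b >]) _ _ kb (asboolT (sol_k b bs)).
exact: sol_b i (H_mono _ _ _ k_le Hki).
Qed.

End Diagonal.

Section PartialSolutions.
Variables (R : countPzRingType) (B : countType) (M : B -> lmodType R).
Local Notation Q := (quotmod M).
Local Notation pi := (\pi_Q).
Variables (I J : Type) (eqs : I -> seq (R * J)) (rhs : I -> Q).
Local Notation sol := (solves eqs rhs).

Definition agrees (G : set (J * Q)) (y : J -> Q) : Prop :=
  forall v q, G (v, q) -> y v = q.

Definition extensible (G : set (J * Q)) : Prop :=
  forall F : seq I, exists2 y, agrees G y & forall i, List.In i F -> sol y i.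

Definition domain (G : set (J * Q)) : set J := fun v => exists q, G (v, q).

Definition vars (F : seq I) : seq J := List.flat_map (fun i => map snd (eqs i)) F.

Lemma In_vars F i p : List.In i F -> List.In p (eqs i) -> List.In p.2 (vars F).
Proof. by move=> Fi ip; apply/List.in_flat_map; exists i; split; last exact: List.in_map. Qed.

Section OneMoreVariable.
Variables (G : set (J * Q)) (j : J).
Hypotheses (extG : extensible G) (Gj : ~ domain G j).

Definition sol_at (F : seq I) (c : Q) : Prop :=
  exists y : J -> Q, [/\ agrees G y, y j = c & forall i, List.In i F -> sol y i].

Definition hsol_at (F : seq I) (c : Q) : Prop :=
  exists y : J -> Q, [/\ forall v, domain G v -> y v = 0, y j = c &
    forall i, List.In i F -> \sum_(p <- eqs i) p.1 *: y p.2 = 0].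

Lemma sol_at_add F c h : sol_at F c -> hsol_at F h -> sol_at F (c + h).
Proof.
move=> [y [yG yj ysol]] [z [zG zj zsol]].
exists (fun v => y v + z v); split.
- by move=> v q Gvq; rewrite (yG _ _ Gvq) zG ?addr0 //; exists q.
- by rewrite yj zj.
move=> i Fi; rewrite /solves.
under eq_bigr => p _ do rewrite scalerDr.
by rewrite big_split /= zsol // addr0; apply: ysol.
Qed.

Lemma hsol_at_sub F c c' : sol_at F c -> sol_at F c' -> hsol_at F (c - c').
Proof.
move=> [y [yG yj ysol]] [z [zG zj zsol]].
exists (fun v => y v - z v); split.
- by move=> v [q Gvq]; rewrite (yG _ _ Gvq) (zG _ _ Gvq) subrr.
- by rewrite yj zj.
move=> i Fi; under eq_bigr => p _ do rewrite scalerBr.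
by rewrite sumrB ysol // zsol // subrr.
Qed.

Lemma sol_at_incl F F' c :
  (forall i, List.In i F' -> List.In i F) -> sol_at F c -> sol_at F' c.
Proof. by move=> F'F [y [yG yj ysol]]; exists y; split=> // i /F'F /ysol. Qed.

Definition position (F : seq I) (v : J) : nat :=
  find (fun w => `[< w = v >]) (j :: vars F).

(* Variables of [domain G] are killed and the others renumbered, [j] becoming
   variable [0]; as R is countable, shapes form a countable type. *)
Definition shape (F : seq I) : seq (seq (R * nat)) :=
  [seq [seq (if `[< domain G p.2 >] then 0 else p.1, position F p.2) | p <- eqs i]
  | i <- F].

Definition hsol_shape (k : seq (seq (R * nat))) (c : Q) : Prop :=
  exists2 z : nat -> Q, z 0%N = c &
    forall e, List.In e k -> \sum_(p <- e) p.1 *: z p.2 = 0.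

Lemma hsol_atE F c : hsol_at F c <-> hsol_shape (shape F) c.
Proof.
split=> [[y [y0 yj ysol]] | [z z0 zsol]].
  exists (fun n => y (nth j (j :: vars F) n)) => [|e]; first by rewrite /= yj.
  move=> /List.in_map_iff [i [<- Fi]]; rewrite big_map -[RHS](ysol i Fi).
  apply: eq_big_In => p ip /=.
  case: asboolP => [/y0 -> | _]; first by rewrite scaler0 scale0r.
  by rewrite nth_find_In //; right; apply: In_vars ip.
exists (fun v => if `[< domain G v >] then 0 else z (position F v)); split.
- by move=> v Gv; rewrite asboolT.
- by rewrite asboolF // /position /= asboolT.
move=> i Fi; have := zsol _ (List.in_map _ _ _ Fi).
rewrite big_map => zsol_i; rewrite -[RHS]zsol_i; apply: eq_bigr => p _ /=.
by case: asboolP => _; rewrite ?scale0r ?scaler0.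
Qed.

Lemma sol_at_shape F F' c : shape F = shape F' -> sol_at F c -> sol_at F' c.
Proof.
move=> FF' solF.
have [y yG ysol] := extG (F ++ F').
have solFF' : sol_at (F ++ F') (y j) by exists y.
have /hsol_atE : hsol_at F (c - y j).
  by apply: hsol_at_sub solF (sol_at_incl _ solFF') => i Fi; apply: List.in_or_app; left.
rewrite FF' => /hsol_atE hsolF'.
have solF' : sol_at F' (y j).
  by apply: sol_at_incl solFF' => i F'i; apply: List.in_or_app; right.
by have := sol_at_add solF' hsolF'; rewrite addrC subrK.
Qed.

Lemma extend_one : exists c, extensible (G `|` [set (j, c)]).
Proof.
have [Fn FnP] := countable_image_section shape [::].
pose H m := List.flat_map Fn (List.seq 0 m.+1).
have H_mono k m i : (k <= m)%N -> List.In i (H k) -> List.In i (H m).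
  move=> /leP km /List.in_flat_map [n [/List.in_seq n_k Fni]].
  by apply/List.in_flat_map; exists n; split=> //; apply/List.in_seq; lia.
have Fn_H k i : List.In i (Fn k) -> List.In i (H k).
  by move=> Fki; apply/List.in_flat_map; exists k; split=> //; apply/List.in_seq; lia.
have /choice [y ysol] : forall m, exists y : J -> Q,
    agrees G y /\ forall i, List.In i (H m) -> sol y i.
  by move=> m; have [y yG ysol] := extG (H m); exists y.
have lift_sol m i : List.In i (H m) -> sol (fun v => pi (repr (y m v))) i.
  have -> : (fun v => pi (repr (y m v))) = y m by apply: funext => v; rewrite reprK.
  exact: (ysol m).2.
have [w [w_const wsol]] := countable_diagonal H_mono lift_sol.
have w_agrees : agrees G (fun v => pi (w v)).
  move=> v q Gvq; rewrite (w_const v (repr q)) ?reprK // => m.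
  by rewrite ((ysol m).1 _ _ Gvq).
exists (pi (w j)) => F.
have : sol_at (Fn (pickle (shape F))) (pi (w j)).
  by exists (fun v => pi (w v)); split=> // i /Fn_H /wsol.
move=> /(sol_at_shape (FnP F)) [x [xG xj xsol]].
by exists x => // v q [/xG // | [-> ->]].
Qed.

End OneMoreVariable.

Section Chains.
Variable C : set (set (J * Q)).
Hypotheses (ext0 : extensible set0) (extC : C `<=` extensible)
  (totC : total_on C subset).
Local Notation U := (\bigcup_(X in C) X).

Lemma bigcup_functional v q q' : U (v, q) -> U (v, q') -> q = q'.
Proof.
move=> [X CX Xq] [X' CX' Xq'].
have in_ext Z : X `<=` Z -> X' `<=` Z -> extensible Z -> q = q'.
  move=> XZ X'Z /(_ [::]) [y yZ _].
  by rewrite -(yZ _ _ (XZ _ Xq)) (yZ _ _ (X'Z _ Xq')).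
have [XX'|X'X] := totC CX CX'.
  exact: in_ext XX' _ (extC CX').
exact: in_ext _ X'X (extC CX).
Qed.

Lemma bigcup_finite_cover (L : seq J) : exists X, [/\ extensible X,
  forall Y, C Y -> X `<=` Y \/ Y `<=` X &
  forall v q, List.In v L -> U (v, q) -> X (v, q)].
Proof.
elim: L => [|v L [X [extX cmpX coverX]]].
  by exists set0; split=> // Y _; left.
case: (pselect (exists q, U (v, q))) => [[q [Y CY Yq]] | noU]; last first.
  exists X; split=> // w q [<- | Lw] Uwq; last exact: coverX.
  by case: noU; exists q.
have cover_v Z : Y `<=` Z -> forall q', U (v, q') -> Z (v, q').
  by move=> YZ q' Uq'; rewrite -(@bigcup_functional v q q') //; [apply: YZ | exists Y].
have [XY|YX] := cmpX Y CY.
  exists Y; split=> [|Y' CY'|w q' [<- | Lw] Uwq']; first exact: extC.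
  - exact: totC.
  - exact: cover_v.
  - exact/XY/coverX.
exists X; split=> // w q' [<- | Lw] Uwq'; last exact: coverX.
exact: cover_v.
Qed.

Lemma extensible_bigcup : extensible U.
Proof.
move=> F; have /choice [u uU] : forall v, exists x : Q, forall q, U (v, q) -> x = q.
  move=> v; case: (pselect (exists q, U (v, q))) => [[q Uq] | noU].
    by exists q => q'; apply: bigcup_functional.
  by exists 0 => q Uq; case: noU; exists q.
have [X [extX _ coverX]] := bigcup_finite_cover (vars F).
have [y yX ysol] := extX F.
exists (fun v => if `[< exists q, U (v, q) >] then u v else y v).
  by move=> v q Uq; rewrite asboolT ?(uU _ _ Uq) //; exists q.
move=> i Fi; rewrite /solves -(ysol i Fi); apply: eq_big_In => p ip.
case: asboolP => // [[q Uq]].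
by rewrite (uU _ _ Uq) (yX _ _ (coverX _ _ (In_vars Fi ip) Uq)).
Qed.

End Chains.

Lemma extensible_total (A : set (J * Q)) :
  extensible A -> (forall v, domain A v) -> exists x : J -> Q, forall i, sol x i.
Proof.
move=> extA /choice [x Ax]; exists x => i.
have [y yA /(_ i (or_introl erefl))] := extA [:: i].
suff -> : y = x by [].
by apply: funext => v; apply: yA.
Qed.

End PartialSolutions.

Theorem proposition1 (R : countPzRingType) (B : countType) (M : B -> lmodType R) :
  alg_compact (quotmod M).
Proof.
move=> K I J _ _ _ _ eqs rhs fin_sol.
have ext0 : extensible eqs rhs set0.
  by move=> F; have [x xF] := fin_sol F; exists x.
have [A [extA maxA]] := Zorn_bigcup (fun C => extensible_bigcup (C := C) ext0).
apply: (extensible_total extA) => j.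
apply: contrapT => Aj.
have [c extAc] := extend_one extA Aj.
apply: (maxA _ _ extAc); split; first exact: subsetUl.
by move/(_ (j, c) (or_intror erefl)) => Ajc; apply: Aj; exists c.
Qed.
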